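(* Let $j = \pm 1$ and let $n$ and $r$ be positive integers. Define \[ \mu_{n} = \prod_{p \mid n,\ p \text{ prime}} p^{1/(p-1)}. \] Then the coefficients of the polynomial \[ \binom{2r}{r}\, {}_{2}F_{1}\!\left(-r,-r+j/n;-2r;n\mu_{n}X\right) \] are algebraic integers.
   Context: ${}_{2}F_{1}(a,b;c;X) = \sum_{s\geq0}\frac{(a)_{s}(b)_{s}}{(c)_{s}\,s!}X^{s}$ with $(y)_{s} = y(y+1)\cdots(y+s-1)$; with $a=-r$ and $c=-2r$ this is the polynomial $\sum_{s=0}^{r}\frac{(-r)_{s}(-r+j/n)_{s}}{(-2r)_{s}\,s!}X^{s}$. *)

From HB Require Import structures.
From mathcomp Require Import all_boot all_order all_algebra all_field.
Set Implicit Arguments. Unset Strict Implicit. Unset Printing Implicit Defensive.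
Import Order.TTheory GRing.Theory Num.Theory.
Local Open Scope ring_scope.

Definition poch (y : algC) (s : nat) : algC := \prod_(i < s) (y + i%:R).

(* mu_n = prod_{p | n, p prime} p^(1/(p-1)), the positive real (p-1)-th root *)
Definition mu (n : nat) : algC :=
  \prod_(p <- primes n) ((p.-1).-root (p%:R : algC)).

Definition F21 (a b c : algC) (r : nat) : {poly algC} :=
  \poly_(s < r.+1) (poch a s * poch b s / (poch c s * (s`!)%:R)).

Definition lemma_poly (j : int) (n r : nat) : {poly algC} :=
  ('C(2 * r, r))%:R *:
    (F21 (- (r%:R)) (- (r%:R) + (j%:~R) / (n%:R)) (- ((2 * r)%:R)) r
      \Po ((n%:R * mu n) *: 'X)).

(* The i-th coefficient is C(2r-i, r) * (prod_(k<i) (j - nr + nk)) / i! * mu_n^i.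
   Split i! = D * M into its \pi(n)-part D and its \pi(n)'-part M. Modulo M the
   integer n is invertible, so the arithmetic progression j - nr + nk is congruent
   to n times i consecutive integers, and M divides the product. For a prime
   p | n, Legendre's bound (p - 1) v_p(i!) <= i shows that p^(i/(p-1)) / p^v_p(i!)
   is an algebraic integer, hence so is mu_n^i / D. *)

From mathcomp Require Import all_boot all_order all_algebra all_field.
From mathcomp Require Import ring zify.
Import Order.TTheory GRing.Theory Num.Theory.

Set Implicit Arguments.
Unset Strict Implicit.
Unset Printing Implicit Defensive.

Lemma leq_predn_sum_divn_expS (p N m : nat) : (0 < p)%N ->
  (p.-1 * \sum_(k < N) m %/ p ^ k.+1 <= m)%N.
Proof.
move=> p_gt0; elim: N m => [|N IHN] m; first by rewrite big_ord0 muln0.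
rewrite big_ord_recl /=.
under eq_bigr => k _ do rewrite /bump /= add1n expnS divnMA.
have := IHN (m %/ p); have := leq_divM m p.
move: (m %/ p) (\sum_(k < N) _) => q S.
by case: p p_gt0 {IHN} => // p _ /=; nia.
Qed.

Lemma leq_predn_logn_fact (p s : nat) : prime p -> (p.-1 * logn p s`! <= s)%N.
Proof.
move=> p_pr; rewrite logn_fact // big_add1 big_mkord.
exact: leq_predn_sum_divn_expS (prime_gt0 p_pr).
Qed.

Lemma prod_addSn_ffact (c s : nat) : (\prod_(k < s) (c.+1 + k) = (c + s) ^_ s)%N.
Proof.
rewrite ffact_prod (reindex_inj rev_ord_inj) /=; apply: eq_bigr => k _.
by have := ltn_ord k; lia.
Qed.

Lemma dvdn_fact_prod_addn (c s : nat) : (s`! %| \prod_(k < s) (c + k))%N.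
Proof.
case: c => [|c]; last by rewrite prod_addSn_ffact -bin_ffact dvdn_mull.
by case: s => [|s]; rewrite ?big_ord0 // big_ord_recl mul0n dvdn0.
Qed.

Lemma mul_bin_ffact (n k i : nat) : (i + k <= n)%N ->
  ('C(n, k) * (n - k) ^_ i = 'C(n - i, k) * n ^_ i)%N.
Proof.
move=> le_ikn; apply/eqP.
rewrite -(eqn_pmul2r (fact_gt0 k)) -(eqn_pmul2r (fact_gt0 (n - k - i))); apply/eqP.
transitivity ('C(n, k) * (k`! * ((n - k) ^_ i * (n - k - i)`!)))%N; first by ring.
rewrite ffact_fact ?bin_fact; [|lia..].
have -> : (n - k - i = n - i - k)%N by lia.
transitivity ('C(n - i, k) * (k`! * (n - i - k)`!) * n ^_ i)%N; last by ring.
rewrite bin_fact; last by lia.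
by rewrite mulnC ffact_fact //; lia.
Qed.

Lemma eqz_mod_prod (I : Type) (r : seq I) (P : pred I) (F G : I -> int) (d : int) :
  (forall i, P i -> (F i = G i %[mod d])%Z) ->
  (\prod_(i <- r | P i) F i = \prod_(i <- r | P i) G i %[mod d])%Z.
Proof.
move=> eqFG; elim/big_ind2: _ => // x1 x2 y1 y2 e1 e2.
by rewrite -modzMm e1 e2 modzMm.
Qed.

Local Open Scope ring_scope.

Lemma dvdz_prod_arith_prog (M n s : nat) (a : int) : coprime M n -> (M %| s`!)%N ->
  (M%:Z %| \prod_(k < s) (a + n%:Z * k%:Z))%Z.
Proof.
move=> coMn dvd_M_fact.
have M_gt0 : (0 < M)%N by apply: dvdn_gt0 dvd_M_fact; exact: fact_gt0.
have [u [v uMvn]] := Bezoutz M n; rewrite /gcdz /= (eqP coMn) in uMvn.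
(* v inverts n modulo M, so a = n (a v) = n c modulo M. *)
pose c := absz ((a * v) %% M)%Z.
have c_eq : c%:Z = a * v - ((a * v) %/ M)%Z * M%:Z.
  by rewrite gez0_abs ?modz_ge0 ?eqz_nat -?lt0n // {2}(divz_eq (a * v) M) addrC addKr.
have shift k : (a + n%:Z * k%:Z = n%:Z * (c + k)%N%:Z %[mod M])%Z.
  apply/eqP; rewrite eqz_mod_dvd; apply/dvdzP.
  exists (a * u + n%:Z * ((a * v) %/ M)%Z).
  have a_eq : a = a * (u * M%:Z + v * n%:Z) by rewrite uMvn mulr1.
  by rewrite PoszD c_eq {1}a_eq; ring.
apply/dvdz_mod0P; rewrite (eqz_mod_prod _ (fun (k : 'I_s) _ => shift k)).
apply/dvdz_mod0P; rewrite big_split /=; apply: dvdz_mull.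
rewrite -(big_morph _ PoszM (erefl 1%:Z)).
exact: dvdn_trans dvd_M_fact (dvdn_fact_prod_addn c s).
Qed.

Lemma partn_pi_of (m n : nat) : (m`_\pi(n) = \prod_(p <- primes n) p ^ logn p m)%N.
Proof.
rewrite (@widen_partn (maxn m n)) ?leq_maxl //.
by rewrite -big_filter filter_pi_of // ltnS leq_maxr.
Qed.

Lemma Aint_rootC_nat (k m : nat) : (0 < k)%N -> k.-root (m%:R : algC) \in Aint.
Proof.
move=> k_gt0; apply: (@root_monic_Aint ('X^k - (m%:R)%:P)).
- by rewrite /root !hornerE rootCK // subrr.
- exact: monicXnsubC.
- by rewrite polyOverXnsubC natr_int.
Qed.

Lemma Aint_rootC_exp_div (k m s e : nat) : (0 < k)%N -> (0 < m)%N -> (k * e <= s)%N ->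
  k.-root (m%:R : algC) ^+ s / (m ^ e)%:R \in Aint.
Proof.
move=> k_gt0 m_gt0 le_ke_s; set x := k.-root _.
have x_neq0 : x != 0 by rewrite rootC_eq0 // pnatr_eq0 -lt0n.
rewrite natrX -[m%:R](rootCK k_gt0) -/x -exprM -expfB_cond ?(negbTE x_neq0) //.
exact/rpredX/Aint_rootC_nat.
Qed.

Lemma Aint_mu_exp_div_partn (n s : nat) : mu n ^+ s / (s`!`_\pi(n))%N%:R \in Aint.
Proof.
rewrite partn_pi_of natr_prod /mu -prodrXl -prodf_div big_seq.
apply: rpred_prod => p; rewrite mem_primes => /and3P[p_pr _ _].
apply: Aint_rootC_exp_div; [|exact: prime_gt0|exact: leq_predn_logn_fact].
by rewrite -ltnS prednK ?prime_gt1 ?prime_gt0.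
Qed.

Lemma Aint_prod_arith_prog_div_fact_mu (n s : nat) (a : int) : (0 < n)%N ->
  (\prod_(k < s) (a + n%:Z * k%:Z))%:~R / (s`!)%:R * mu n ^+ s \in Aint.
Proof.
move=> n_gt0; set D := (s`!`_\pi(n))%N; set M := (s`!`_(\pi(n))^')%N.
have DM : (D * M = s`!)%N by rewrite partnC ?fact_gt0.
have /dvdzP[q ->] : (M%:Z %| \prod_(k < s) (a + n%:Z * k%:Z))%Z.
  apply: dvdz_prod_arith_prog; last by rewrite -DM dvdn_mull.
  by have := coprime_partC (\pi(n))^' s`! n; rewrite partnNK partn_pi.
have D_neq0 : (D%:R : algC) != 0 by rewrite pnatr_eq0 -lt0n part_gt0.
have M_neq0 : (M%:R : algC) != 0 by rewrite pnatr_eq0 -lt0n part_gt0.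
rewrite -DM natrM rmorphM /= -pmulrn.
have -> : q%:~R * M%:R / (D%:R * M%:R) * mu n ^+ s = q%:~R * (mu n ^+ s / D%:R) :> algC.
  by field; rewrite D_neq0 M_neq0.
by rewrite rpredM ?Aint_int ?Aint_mu_exp_div_partn.
Qed.

Lemma coef_comp_scaleX (R : comNzRingType) (p : {poly R}) (c : R) (i : nat) :
  (p \Po (c *: 'X))`_i = p`_i * c ^+ i.
Proof.
rewrite comp_polyE coef_sum.
under eq_bigr => k _ do rewrite exprZn coefZ coefZ coefXn mulrA.
have [lt_i_p | le_p_i] := ltnP i (size p).
  rewrite (bigD1 (Ordinal lt_i_p)) //= eqxx mulr1 big1 ?addr0 // => k.
  by rewrite -val_eqE eq_sym /= => /negbTE ->; rewrite mulr0.
rewrite nth_default // mul0r big1 // => k _.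
by rewrite gtn_eqF ?mulr0 // (leq_trans (ltn_ord k)).
Qed.

Lemma poch_opp_nat (m i : nat) : (i <= m)%N ->
  poch (- (m%:R)) i = (-1) ^+ i * (m ^_ i)%:R.
Proof.
move=> le_im; rewrite /poch ffact_prod natr_prod -[i in (-1) ^+ i]card_ord -prodrN.
apply: eq_bigr => k _; rewrite natrB; first by rewrite opprB addrC.
exact: leq_trans (ltnW (ltn_ord k)) le_im.
Qed.

Lemma exprn_poch_div (n i : nat) (a : int) : (0 < n)%N ->
  (n%:R : algC) ^+ i * poch (a%:~R / n%:R) i = (\prod_(k < i) (a + n%:Z * k%:Z))%:~R.
Proof.
move=> n_gt0; have n_neq0 : (n%:R : algC) != 0 by rewrite pnatr_eq0 -lt0n.
rewrite /poch -[i in _ ^+ i]card_ord -prodr_const -big_split rmorph_prod /=.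
apply: eq_bigr => k _; rewrite rmorphD rmorphM /= -!pmulrn.
by field.
Qed.

Lemma coef_lemma_poly (j : int) (n r i : nat) : (0 < n)%N ->
  (lemma_poly j n r)`_i = if (i <= r)%N then
    'C(2 * r - i, r)%:R *
      ((\prod_(k < i) ((j - n%:Z * r%:Z) + n%:Z * k%:Z))%:~R / (i`!)%:R * mu n ^+ i)
  else 0.
Proof.
move=> n_gt0; rewrite /lemma_poly coefZ coef_comp_scaleX /F21 coef_poly ltnS.
case: leqP => [le_ir | _]; last by rewrite mul0r mulr0.
have le_i_2r : (i <= 2 * r)%N by lia.
have n_neq0 : (n%:R : algC) != 0 by rewrite pnatr_eq0 -lt0n.
have ffact_neq0 : (((2 * r) ^_ i)%:R : algC) != 0 by rewrite pnatr_eq0 -lt0n ffact_gt0.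
have fact_neq0 : ((i`!)%:R : algC) != 0 by rewrite pnatr_eq0 -lt0n fact_gt0.
have sign_neq0 : ((-1) ^+ i : algC) != 0 by rewrite signr_eq0.
have binE : 'C(2 * r - i, r)%:R = 'C(2 * r, r)%:R * (r ^_ i)%:R / ((2 * r) ^_ i)%:R :> algC.
  have two_r_sub_r : (2 * r - r = r)%N by lia.
  have := mul_bin_ffact (n := 2 * r) (k := r) (i := i); rewrite two_r_sub_r => binE_nat.
  rewrite -natrM binE_nat; last by lia.
  by rewrite natrM mulfK.
have -> : - r%:R + j%:~R / n%:R = (j - n%:Z * r%:Z)%:~R / n%:R :> algC.
  by rewrite rmorphB rmorphM /= -!pmulrn; field.
rewrite !poch_opp_nat // -exprn_poch_div // binE exprMn.
by field; rewrite sign_neq0 ffact_neq0 fact_neq0.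
Qed.

Theorem lemma2p4 (j : int) (n r : nat) :
  (j = 1 \/ j = -1) -> (0 < n)%N -> (0 < r)%N ->
  forall i : nat, (lemma_poly j n r)`_i \in Aint.
Proof.
move=> _ n_gt0 _ i; rewrite coef_lemma_poly //.
case: ifP => _; last exact: rpred0.
by rewrite rpredM ?rpred_nat ?Aint_prod_arith_prog_div_fact_mu.
Qed.
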